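(* Let $S$ be a supersymmetric numerical semigroup with multiplicity $e$ and blowup $B$. Then ${\rm d}_{\max}(S)=d(F(B)+e;B^{\mathcal D})$.
   Context: $S$ is a numerical semigroup (a submonoid of $\mathbb N$ with finite complement) with minimal generators $e<a_1<\dots<a_t$. An $S$-factorization of $n$ is $(c_0,\dots,c_t)\in\mathbb N^{t+1}$ with $c_0e+\sum c_ia_i=n$, of length $\sum c_i$. ${\rm ord}(n;S)$ is the maximal such length, ${\rm d}_{\max}(n;S)$ is the number of factorizations of maximal length, and ${\rm d}_{\max}(S)=\max_{n\in S}{\rm d}_{\max}(n;S)$. $S$ is additive if ${\rm ord}(u+e;S)={\rm ord}(u;S)+1$ for all $u\in S$. With $\operatorname{Ap}(S;e)=\{w\in S:w-e\notin S\}=\{w_0<w_1<\dots<w_{e-1}\}$, $S$ is supersymmetric if $S$ is additive and, whenever $i+j=e-1$, both $w_i+w_j=w_{e-1}$ and ${\rm ord}(w_i;S)+{\rm ord}(w_j;S)={\rm ord}(w_{e-1};S)$ hold. The blowup is $B=\langle e,d_1,\dots,d_t\rangle$ with $d_i=a_i-e$, and $\mathcal D=(e,d_1,\dots,d_t)$. $d(b;B^{\mathcal D})$ is the number of tuples $(x_0,\dots,x_t)\in\mathbb N^{t+1}$ with $x_0e+\sum x_id_i=b$. $F(B)$ is the largest integer not in $B$. *)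

From mathcomp Require Import all_boot all_order all_algebra.
Set Implicit Arguments. Unset Strict Implicit. Unset Printing Implicit Defensive.
Import Order.TTheory GRing.Theory Num.Theory.

(* A numerical semigroup is given by the increasing list of its minimal
   generators g = [:: e; a_1; ...; a_t].  All generators are >= 1, so a
   factorization (c_0,...,c_t) of n has every c_i <= n; we therefore encode
   factorizations as finite functions 'I_(size g) -> 'I_n.+1. *)

Definition fact_set (g : seq nat) (n : nat) : {set {ffun 'I_(size g) -> 'I_n.+1}} :=
  [set c : {ffun 'I_(size g) -> 'I_n.+1} | \sum_(i < size g) (c i : nat) * nth 0 g i == n].

Definition inS (g : seq nat) (n : nat) : bool := fact_set g n != set0.

Definition flen (m k : nat) (c : {ffun 'I_m -> 'I_k}) : nat := \sum_(i < m) (c i : nat).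

Definition ordS (g : seq nat) (n : nat) : nat := \max_(c in fact_set g n) flen c.

Definition dmax (g : seq nat) (n : nat) : nat :=
  #|[set c in fact_set g n | flen c == ordS g n]|.

Definition is_dmaxS (g : seq nat) (v : nat) : Prop :=
  (exists n, inS g n /\ dmax g n = v) /\ (forall n, inS g n -> dmax g n <= v).

Definition mult (g : seq nat) : nat := head 0 g.

Definition drop_gen (g : seq nat) (i : nat) : seq nat :=
  [seq nth 0 g j | j <- iota 0 (size g) & j != i].

Definition num_semigroup_mingens (g : seq nat) : Prop :=
  [/\ 0 < mult g,
      sorted ltn g,
      (exists N, forall n, N <= n -> inS g n) &
      (forall i, i < size g -> ~~ inS (drop_gen g i) (nth 0 g i))].

Definition inAp (g : seq nat) (w : nat) : bool :=
  inS g w && ~~ ((mult g <= w) && inS g (w - mult g)).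

(* index of w in the increasing enumeration w_0 < w_1 < ... of Ap(S;e) *)
Definition ap_index (g : seq nat) (w : nat) : nat := count (inAp g) (iota 0 w).

Definition additive (g : seq nat) : Prop :=
  forall u, inS g u -> ordS g (u + mult g) = (ordS g u).+1.

Definition supersymmetric (g : seq nat) : Prop :=
  additive g /\
  forall wi wj wm, inAp g wi -> inAp g wj -> inAp g wm ->
    ap_index g wm = (mult g).-1 ->
    ap_index g wi + ap_index g wj = (mult g).-1 ->
    wi + wj = wm /\ ordS g wi + ordS g wj = ordS g wm.

Definition blowup (g : seq nat) : seq nat :=
  mult g :: [seq a - mult g | a <- behead g].

(* f is the Frobenius number (largest integer not in the semigroup generated
   by g); negative integers are not in the semigroup, so f = -1 if it is N *)
Definition frobenius (g : seq nat) (f : int) : Prop :=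
  ~~ ((0 <= f)%R && inS g (absz f)) /\
  forall z : int, (f < z)%R -> (0 <= z)%R && inS g (absz z).

From Pilot Require Import Defs.
From mathcomp Require Import all_boot all_order all_algebra.
From mathcomp Require Import zify.
Import Order.TTheory.
Set Implicit Arguments. Unset Strict Implicit. Unset Printing Implicit Defensive.

(* Write a factorization of [n] in [S = <e, a_1, ..., a_t>] as [x = (x_0, ..., x_t)].
   Since [a_i = e + d_i], we have [n = |x| e + phi x] with [phi x = sum_(i >= 1) x_i d_i]
   an element of the blowup [B]; on factorizations of maximal length [phi x] is thus
   forced to be [rest n = n - ord(n) e], and forgetting [x_0] is injective on them.
   By additivity [rest] is constant on [n + k e], hence determined by the Apery set,
   and supersymmetry pairs [w_i] with [w_(e-1-i)] so that their rests add up to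
   [m := rest w_(e-1)].  Adding a fixed complement thus embeds the maximal
   factorizations of any [n] into the factorizations of [m] in [B], and conversely
   every factorization of [m] in [B] (it cannot use [e], as [m - e] is not in [B])
   pads to a maximal factorization of [w_(e-1) + m e].  Finally [m - e = F(B)]: every
   [z] outside [B] lies below the element [rest n <= m] of [B] in its class mod [e]. *)

(* [ordS] alone would denote the cyclic successor on ['I_n]. *)
Local Notation ordS := Defs.ordS.

Definition fsum (g : seq nat) (x : nat -> nat) := \sum_(i < size g) x i * nth 0 g i.
Definition len (k : nat) (x : nat -> nat) := \sum_(i < k) x i.

(* Factorizations are handled as functions [nat -> nat]; outside the index
   range [natf c] is [0]. *)
Definition natf k N (c : {ffun 'I_k -> 'I_N}) (i : nat) : nat :=
  if insub i is Some j then c j else 0.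

Definition clear0 (x : nat -> nat) (i : nat) := if i == 0 then 0 else x i.
Definition add0 (k : nat) (x : nat -> nat) (i : nat) := x i + (i == 0) * k.

Definition pos_gens (g : seq nat) := forall i, i < size g -> 0 < nth 0 g i.

Section NatFactorizations.

Lemma natf_ord k N (c : {ffun 'I_k -> 'I_N}) (j : 'I_k) : natf c j = c j.
Proof. by rewrite /natf valK. Qed.

Lemma natf_inj k N (c c' : {ffun 'I_k -> 'I_N}) :
  (forall i, i < k -> natf c i = natf c' i) -> c = c'.
Proof.
move=> E; apply/ffunP => j; apply: val_inj.
by rewrite /= -!natf_ord E.
Qed.

Lemma flenE k N (c : {ffun 'I_k -> 'I_N}) : flen c = len k (natf c).
Proof. by apply: eq_bigr => i _; rewrite natf_ord. Qed.

Lemma fact_setE g n (c : {ffun 'I_(size g) -> 'I_n.+1}) :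
  (c \in fact_set g n) = (fsum g (natf c) == n).
Proof. by rewrite inE; congr (_ == _); apply: eq_bigr => i _; rewrite natf_ord. Qed.

Lemma eq_fsum g x y : (forall i, i < size g -> x i = y i) -> fsum g x = fsum g y.
Proof. by move=> E; apply: eq_bigr => i _; rewrite E. Qed.

Lemma eq_len k x y : (forall i, i < k -> x i = y i) -> len k x = len k y.
Proof. by move=> E; apply: eq_bigr => i _; rewrite E. Qed.

Lemma fsumD g x y : fsum g (fun i => x i + y i) = fsum g x + fsum g y.
Proof. by rewrite /fsum -big_split; apply: eq_bigr => i _; rewrite mulnDl. Qed.

Lemma lenD k x y : len k (fun i => x i + y i) = len k x + len k y.
Proof. by rewrite /len -big_split. Qed.

Lemma fsum_add0 a s k x : fsum (a :: s) (add0 k x) = fsum (a :: s) x + k * a.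
Proof.
rewrite fsumD; congr (_ + _).
by rewrite /fsum big_ord_recl big1 /= => [|i _]; rewrite ?mul1n ?mul0n ?addn0.
Qed.

Lemma len_add0 n k x : len n.+1 (add0 k x) = len n.+1 x + k.
Proof.
rewrite lenD; congr (_ + _).
by rewrite /len big_ord_recl big1 /= => [|i _]; rewrite ?mul1n ?mul0n ?addn0.
Qed.

Lemma add0_clear0 x i : add0 (x 0) (clear0 x) i = x i.
Proof. by case: i => [|i]; rewrite /add0 /clear0 /= ?mul1n ?mul0n ?addn0. Qed.

Lemma clear0_add0 k x i : clear0 (add0 k x) i = clear0 x i.
Proof. by case: i => [|i]; rewrite /add0 /clear0 /= ?mul0n ?addn0. Qed.

Lemma fsum_clear0 a s x : fsum (a :: s) x = fsum (a :: s) (clear0 x) + x 0 * a.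
Proof. by rewrite -fsum_add0; apply: eq_fsum => i _; rewrite add0_clear0. Qed.

Lemma len_clear0 n x : len n.+1 x = len n.+1 (clear0 x) + x 0.
Proof. by rewrite -len_add0; apply: eq_len => i _; rewrite add0_clear0. Qed.

Lemma natf_inj_clear0 k N (c c' : {ffun 'I_k.+1 -> 'I_N}) : flen c = flen c' ->
  (forall i, i < k.+1 -> clear0 (natf c) i = clear0 (natf c') i) -> c = c'.
Proof.
rewrite !flenE (len_clear0 k (natf c)) (len_clear0 k (natf c')).
move=> len_cc' clear_cc'; apply: natf_inj => -[|i] lt_i.
  by move: len_cc'; rewrite (eq_len clear_cc') => /addnI.
exact: clear_cc' lt_i.
Qed.

Variable g : seq nat.
Hypothesis g_pos : pos_gens g.

Lemma coef_le_fsum x j : j < size g -> x j <= fsum g x.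
Proof.
move=> lt_j; rewrite /fsum (bigD1 (Ordinal lt_j)) //=.
by apply: leq_trans (leq_addr _ _); rewrite leq_pmulr // g_pos.
Qed.

Lemma len_le_fsum x : len (size g) x <= fsum g x.
Proof. by apply: leq_sum => i _; rewrite leq_pmulr // g_pos. Qed.

Definition ffun_of n x : {ffun 'I_(size g) -> 'I_n.+1} := [ffun j => inord (x j)].

Lemma natf_ffun_of n x :
  fsum g x = n -> forall i, i < size g -> natf (ffun_of n x) i = x i.
Proof.
move=> sum_x i lt_i; rewrite -[i]/(Ordinal lt_i : nat) natf_ord ffunE inordK //.
by rewrite ltnS -sum_x coef_le_fsum.
Qed.

Lemma ffun_of_fact n x : fsum g x = n -> ffun_of n x \in fact_set g n.
Proof.
by move=> sum_x; rewrite fact_setE (eq_fsum (natf_ffun_of sum_x)) sum_x.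
Qed.

Lemma inS_fsumP n : reflect (exists x, fsum g x = n) (inS g n).
Proof.
apply: (iffP (set0Pn (fact_set g n))) => [[c]|[x /ffun_of_fact c_fact]].
  by rewrite fact_setE => /eqP sum_c; exists (natf c).
by exists (ffun_of n x).
Qed.

Lemma ordS_ge n x : fsum g x = n -> len (size g) x <= ordS g n.
Proof.
move=> sum_x; apply: leq_trans (leq_bigmax_cond _ (ffun_of_fact sum_x)).
by rewrite flenE (eq_len (natf_ffun_of sum_x)).
Qed.

Lemma card_le_fact_set k N m (A : {set {ffun 'I_k -> 'I_N}})
    (P : pred {ffun 'I_(size g) -> 'I_m.+1}) (h : (nat -> nat) -> nat -> nat) :
  (forall c, c \in A -> fsum g (h (natf c)) = m) ->
  (forall c c2, c \in A ->
     (forall i, i < size g -> natf c2 i = h (natf c) i) -> P c2) ->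
  (forall c c', c \in A -> c' \in A ->
     (forall i, i < size g -> h (natf c) i = h (natf c') i) -> c = c') ->
  #|A| <= #|[set c2 in fact_set g m | P c2]|.
Proof.
move=> sum_h P_h inj_h; pose H (c : {ffun 'I_k -> 'I_N}) := ffun_of m (h (natf c)).
have HE c : c \in A -> forall i, i < size g -> natf (H c) i = h (natf c) i.
  by move=> cA i; apply/natf_ffun_of/sum_h.
rewrite -(card_in_imset (f := H)); last first.
  move=> c c' cA c'A Hcc'; apply: inj_h => // i lt_i.
  by rewrite -HE // -[RHS]HE // Hcc'.
apply/subset_leq_card/subsetP => _ /imsetP [c cA ->].
by rewrite inE ffun_of_fact ?sum_h //; apply: P_h (HE c cA).
Qed.

End NatFactorizations.

Lemma inS_cons_addn_mul a t n k :
  pos_gens (a :: t) -> inS (a :: t) n -> inS (a :: t) (n + k * a).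
Proof.
move=> pos_at /(inS_fsumP pos_at) [x sum_x]; apply/(inS_fsumP pos_at).
by exists (add0 k x); rewrite fsum_add0 sum_x.
Qed.

Lemma frobenius_uniq g f1 f2 : frobenius g f1 -> frobenius g f2 -> f1 = f2.
Proof.
move=> [not1 above1] [not2 above2].
case: (ltgtP f1 f2) => [/above1 | /above2 |] //.
  by rewrite (negbTE not2).
by rewrite (negbTE not1).
Qed.

Lemma ordS_attained g n :
  inS g n -> exists2 x, fsum g x = n & len (size g) x = ordS g n.
Proof.
move=> n_in; have facts_n : 0 < #|fact_set g n| by rewrite card_gt0.
have [c c_fact ord_c] := eq_bigmax_cond (@flen _ _) facts_n.
by exists (natf c); [apply/eqP; rewrite -fact_setE | rewrite /Defs.ordS ord_c flenE].
Qed.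

Section Apery.
Variables (P : pred nat) (e : nat).
Hypothesis e_pos : 0 < e.
Hypothesis P_adde : forall n, P n -> P (n + e).
Hypothesis P_cofinite : exists N, forall n, N <= n -> P n.

Definition apery w := P w && ~~ ((e <= w) && P (w - e)).
Definition apery_index w := count apery (iota 0 w).

Lemma P_addn_mul n k : P n -> P (n + k * e).
Proof.
move=> Pn; elim: k => [|k IHk]; first by rewrite addn0.
by rewrite mulSnr addnA P_adde.
Qed.

Lemma eqmod_addn_mul v w : v <= w -> v %% e = w %% e -> exists q, w = v + q * e.
Proof.
move=> le_vw v_w; have /dvdnP [q def_q] : e %| w - v by rewrite -eqn_mod_dvd // v_w.
by exists q; rewrite -def_q subnKC.
Qed.

Lemma exists_eqmod r : exists n, P n && (n %% e == r %% e).
Proof.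
case: P_cofinite => N PN; exists (N * e + r); rewrite modnMDl eqxx andbT.
by apply: PN; apply: leq_trans (leq_pmulr N e_pos) (leq_addr _ _).
Qed.

Definition apery_of r := ex_minn (exists_eqmod r).

Lemma apery_ofP r : [/\ P (apery_of r), apery_of r %% e = r %% e &
  forall n, P n -> n %% e = r %% e -> apery_of r <= n].
Proof.
rewrite /apery_of; case: ex_minnP => n /andP [Pn /eqP n_r] n_min.
by split => // k Pk k_r; apply: n_min; rewrite Pk k_r eqxx.
Qed.

Lemma apery_min w v : apery w -> P v -> v %% e = w %% e -> w <= v.
Proof.
case/andP => _ w_min Pv v_w; rewrite leqNgt; apply/negP => lt_vw.
have [[|q] def_w] := eqmod_addn_mul (ltnW lt_vw) v_w.
  by rewrite def_w mul0n addn0 ltnn in lt_vw.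
apply: (negP w_min); rewrite def_w mulSn addnCA leq_addr addKn.
exact: P_addn_mul.
Qed.

Lemma apery_eqmod_inj w w' : apery w -> apery w' -> w %% e = w' %% e -> w = w'.
Proof.
move=> Aw Aw' w_w'; apply/eqP; rewrite eqn_leq.
by rewrite (apery_min Aw (andP Aw').1) // (apery_min Aw' (andP Aw).1).
Qed.

Lemma apery_apery_of r : apery (apery_of r).
Proof.
case: (apery_ofP r) => Pa a_r a_min; rewrite /apery Pa /=.
apply/negP => /andP [le_ea Pae].
have := a_min _ Pae; rewrite -a_r -{2}(subnK le_ea) modnDr => /(_ erefl).
by rewrite leqNgt ltn_subrL e_pos (leq_trans e_pos le_ea).
Qed.

Lemma apery_decomp n : P n -> exists w k, apery w /\ n = w + k * e.
Proof.
move=> Pn; case: (apery_ofP n) => _ a_n a_min.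
have [k def_n] := eqmod_addn_mul (a_min n Pn erefl) a_n.
by exists (apery_of n), k; split; first exact: apery_apery_of.
Qed.

(* The Apery elements below [w] have pairwise distinct residues, all
   different from that of [w]. *)
Lemma apery_index_lt w : apery w -> apery_index w < e.
Proof.
move=> Aw; rewrite /apery_index -size_filter.
set s := filter apery (iota 0 w).
have uniq_res : uniq (map (modn^~ e) s).
  rewrite map_inj_in_uniq ?filter_uniq ?iota_uniq // => x y.
  by rewrite !mem_filter => /andP [Ax _] /andP [Ay _]; apply: apery_eqmod_inj.
have sub_res : {subset map (modn^~ e) s <= rem (w %% e) (iota 0 e)}.
  move=> y /mapP [x]; rewrite mem_filter mem_iota => /andP [Ax /andP [_ lt_xw]] ->.
  rewrite (mem_rem_uniq _ (iota_uniq 0 e)) inE mem_iota /= ltn_pmod // andbT.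
  by apply: contraTneq lt_xw => /(apery_eqmod_inj Ax Aw) ->; rewrite ltnn.
have := uniq_leq_size uniq_res sub_res.
rewrite size_map size_rem ?size_iota; last by rewrite mem_iota ltn_pmod.
by rewrite -ltnS prednK.
Qed.

Lemma apery_index_mono a b : apery a -> a < b -> apery_index a < apery_index b.
Proof.
move=> Aa lt_ab; have [k ->] : exists k, b = a + k.+1 by exists (b - a).-1; lia.
by rewrite /apery_index iotaD count_cat /= Aa add0n addnS ltnS leq_addr.
Qed.

Lemma apery_index_onto j : j < e -> exists2 w, apery w & apery_index w = j.
Proof.
pose F (r : 'I_e) : 'I_e := Ordinal (apery_index_lt (apery_apery_of r)).
have F_inj : injective F.
  move=> r r' /(congr1 val) /= idx_rr'.
  have apery_rr' : apery_of r = apery_of r'.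
    case: (ltngtP (apery_of r) (apery_of r')) => // lt_rr'.
      by have := apery_index_mono (apery_apery_of r) lt_rr'; rewrite idx_rr' ltnn.
    by have := apery_index_mono (apery_apery_of r') lt_rr'; rewrite idx_rr' ltnn.
  apply: val_inj; case: (apery_ofP r) (apery_ofP r') => _ res_r _ [_ res_r' _].
  by move: res_r res_r'; rewrite !(modn_small (ltn_ord _)) apery_rr' => ->.
move=> lt_je; case: (injF_bij F_inj) => Finv _ FK.
exists (apery_of (Finv (Ordinal lt_je))); first exact: apery_apery_of.
by have /(congr1 val) := FK (Ordinal lt_je).
Qed.

End Apery.

Section Supersymmetric.
Variables (e : nat) (s : seq nat).
Hypothesis e_pos : 0 < e.
Hypothesis e_lt_gens : forall a, a \in s -> e < a.
Hypothesis S_cofinite : exists N, forall n, N <= n -> inS (e :: s) n.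
Hypothesis S_super : supersymmetric (e :: s).

Local Notation gS := (e :: s).
Local Notation gB := (blowup (e :: s)).
Local Notation K := (size s).+1.

Lemma size_blowup : size gB = K.
Proof. by rewrite /= size_map. Qed.

Lemma gS_pos : pos_gens gS.
Proof. by case=> [|j] //= lt_j; rewrite (ltn_trans e_pos) ?e_lt_gens ?mem_nth. Qed.

Lemma gB_pos : pos_gens gB.
Proof.
case=> [|j] //=; rewrite ltnS size_map => lt_j.
by rewrite (nth_map 0) // subn_gt0 e_lt_gens ?mem_nth.
Qed.

Lemma inS_adde n : inS gS n -> inS gS (n + e).
Proof. by move/(inS_cons_addn_mul 1 gS_pos); rewrite mul1n. Qed.

(* Each generator [a_i] of [S] is [e + d_i], with [d_i] the generator of [B]. *)
Definition phi x := fsum gB (clear0 x).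

Lemma fsum_blowup x : fsum gS x = len K x * e + phi x.
Proof.
have clear0E : fsum gS (clear0 x) = len K (clear0 x) * e + phi x.
  rewrite /phi /fsum /len size_blowup big_distrl -big_split /=.
  apply: eq_bigr => -[[|j] lt_j] _ //=.
  by rewrite (nth_map 0) // -mulnDr subnKC // ltnW // e_lt_gens // mem_nth.
rewrite fsum_clear0 clear0E (len_clear0 _ x) mulnDl; lia.
Qed.

Lemma ordS_addn_mul u k : inS gS u -> ordS gS (u + k * e) = ordS gS u + k.
Proof.
move=> Su; elim: k => [|k IHk]; first by rewrite mul0n !addn0.
rewrite mulSnr addnA S_super.1 ?IHk ?addnS //.
exact: inS_cons_addn_mul gS_pos Su.
Qed.

Definition rest n := n - ordS gS n * e.

Lemma phi_maximal x n :
  fsum gS x = n -> len K x = ordS gS n -> phi x = rest n.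
Proof. by move=> <- max_x; rewrite /rest {1}fsum_blowup max_x addKn. Qed.

Lemma ordS_restE n : inS gS n -> n = ordS gS n * e + rest n.
Proof.
case/ordS_attained => x sum_x max_x.
by rewrite -(phi_maximal sum_x max_x) -max_x -fsum_blowup.
Qed.

Lemma inS_rest n : inS gS n -> inS gB (rest n).
Proof.
case/ordS_attained => x sum_x max_x; apply/(inS_fsumP gB_pos).
by exists (clear0 x); apply: phi_maximal.
Qed.

Lemma rest_addn_mul u k : inS gS u -> rest (u + k * e) = rest u.
Proof. by move=> Su; rewrite /rest ordS_addn_mul // mulnDl subnDr. Qed.

Lemma rest_mod n : inS gS n -> rest n %% e = n %% e.
Proof. by move/ordS_restE => {2}->; rewrite modnMDl. Qed.

Variable W : nat.
Hypothesis W_apery : inAp gS W.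
Hypothesis W_index : ap_index gS W = e.-1.

(* [m - e] will turn out to be the Frobenius number of [B]. *)
Local Notation m := (rest W).

Lemma W_in : inS gS W.
Proof. by case/andP: W_apery. Qed.

(* Supersymmetry pairs the Apery element of index [i] with the one of index
   [e - 1 - i]; their rests add up to [m]. *)
Lemma apery_rest_complement w : inAp gS w ->
  exists2 w', inAp gS w' & rest w + rest w' = m.
Proof.
move=> Aw; have lt_we : ap_index gS w < e := apery_index_lt e_pos inS_adde Aw.
have [|w' Aw' idx_w'] :=
  apery_index_onto e_pos inS_adde S_cofinite (j := e.-1 - ap_index gS w); first lia.
have idx_ww' : ap_index gS w + ap_index gS w' = (mult gS).-1.
  by rewrite /= [ap_index _ w']idx_w'; lia.
have [sum_ww' ord_ww'] := S_super.2 _ _ _ Aw Aw' W_apery W_index idx_ww'.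
exists w' => //; move: (ordS_restE (andP Aw).1) (ordS_restE (andP Aw').1).
move: (ordS_restE W_in); rewrite -ord_ww' mulnDl; lia.
Qed.

Lemma rest_complement n : inS gS n -> exists2 c, inS gB c & rest n + c = m.
Proof.
case/(apery_decomp e_pos S_cofinite) => w [k [Aw ->]].
have [w' Aw' rest_ww'] := apery_rest_complement Aw.
exists (rest w'); first exact/inS_rest/(andP Aw').1.
by rewrite rest_addn_mul // (andP Aw).1.
Qed.

Lemma blowup_eqmod_le z : exists2 p, inS gB p & p %% e = z %% e /\ p <= m.
Proof.
have [n /andP [Sn /eqP n_z]] := exists_eqmod e_pos S_cofinite z.
have [c _ rest_c] := rest_complement Sn.
by exists (rest n); [exact: inS_rest | rewrite rest_mod // -rest_c leq_addr].
Qed.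

Lemma notin_blowup_le z : ~~ inS gB z -> z + e <= m.
Proof.
move=> Bz; have [p Bp [p_z le_pm]] := blowup_eqmod_le z.
case: (leqP p z) => [le_pz | lt_zp].
  have [q def_z] := eqmod_addn_mul le_pz p_z.
  by move: Bz; rewrite def_z inS_cons_addn_mul //; exact: gB_pos.
have [[|q] def_p] := eqmod_addn_mul (ltnW lt_zp) (esym p_z).
  by move: lt_zp; rewrite def_p addn0 ltnn.
by apply: leq_trans le_pm; rewrite def_p mulSn addnA leq_addr.
Qed.

Lemma predn_le_m : e.-1 <= m.
Proof.
have [p _ [p_e le_pm]] := blowup_eqmod_le e.-1.
have e_mod : e.-1 %% e = e.-1 by rewrite modn_small // ltn_predL.
by apply: leq_trans le_pm; rewrite -{1}e_mod -p_e leq_mod.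
Qed.

Lemma len_clear0_le_phi y : len K (clear0 y) <= phi y.
Proof. by rewrite -size_blowup; exact: (len_le_fsum gB_pos (clear0 y)). Qed.

(* Reads a factorization [y] in [B] as one in [S] of length [L], by putting
   the missing length on the generator [e]. *)
Definition pad0 L y := add0 (L - len K (clear0 y)) (clear0 y).

Lemma len_pad0 L y : len K (clear0 y) <= L -> len K (pad0 L y) = L.
Proof. by move=> le_yL; rewrite len_add0 subnKC. Qed.

Lemma clear0_pad0 L y i : clear0 (pad0 L y) i = clear0 y i.
Proof. by rewrite clear0_add0; case: i. Qed.

Lemma fsum_pad0 L y : len K (clear0 y) <= L -> fsum gS (pad0 L y) = L * e + phi y.
Proof.
move=> le_yL; rewrite fsum_blowup len_pad0 //; congr (_ + _).
by apply: eq_fsum => i _; rewrite clear0_pad0.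
Qed.

(* A factorization of [m - e] in [B] would give one of [W + m e] in [S]
   longer than its order. *)
Lemma notin_blowup_m_sub : e <= m -> ~~ inS gB (m - e).
Proof.
move=> le_em; apply/negP => /(inS_fsumP gB_pos) [z sum_z].
have phi_z : phi z + z 0 * e = m - e by rewrite -sum_z [RHS]fsum_clear0.
pose L := ordS gS W + m + (z 0).+1.
have le_zL : len K (clear0 z) <= L.
  by rewrite (leq_trans (len_clear0_le_phi z)) // /L; lia.
have := ordS_ge gS_pos (fsum_pad0 le_zL); rewrite len_pad0 //.
have -> : L * e + phi z = W + m * e.
  by move: (ordS_restE W_in); rewrite /L !mulnDl mulSn; lia.
by rewrite ordS_addn_mul ?W_in /L; lia.
Qed.

Lemma frobenius_blowup : frobenius gB (m%:Z - e%:Z)%R.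
Proof.
split.
  apply/negP => /andP [f_ge0 Bf]; have le_em : e <= m by lia.
  by move: Bf; rewrite subzn //= (negbTE (notin_blowup_m_sub le_em)).
move=> [n | n] lt_z.
  apply/andP; split=> //=; case Bn: (inS gB n) => //.
  by have := notin_blowup_le (negbT Bn); lia.
by have := predn_le_m; lia.
Qed.

Lemma dmax_le n : inS gS n -> dmax gS n <= #|fact_set gB m|.
Proof.
move=> Sn; have [b /(inS_fsumP gB_pos) [y sum_y] rest_b] := rest_complement Sn.
apply: (@leq_trans #|[set c2 in fact_set gB m | predT c2]|); last first.
  by apply/subset_leq_card/subsetP => c2; rewrite inE => /andP [].
apply: (card_le_fact_set gB_pos (h := fun x i => clear0 x i + y i)) => //.
  move=> c; rewrite inE fact_setE flenE => /andP [/eqP sum_c /eqP max_c].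
  by rewrite fsumD sum_y -rest_b -(phi_maximal sum_c max_c).
move=> c c'; rewrite !inE => /andP [_ /eqP max_c] /andP [_ /eqP max_c'] hcc'.
apply: natf_inj_clear0; first by rewrite max_c max_c'.
by move=> i lt_i; apply/(@addIn (y i))/hcc'; rewrite size_blowup.
Qed.

Lemma fact_m_split c : c \in fact_set gB m -> phi (natf c) + natf c 0 * e = m.
Proof. by rewrite fact_setE fsum_clear0 => /eqP. Qed.

Lemma fact_m_coef0 c : c \in fact_set gB m -> natf c 0 = 0.
Proof.
move/fact_m_split; case: (natf c 0) => [//|k]; rewrite mulSn => sum_c.
have le_em : e <= m by lia.
case/negP: (notin_blowup_m_sub le_em); apply/(inS_fsumP gB_pos).
exists (add0 k (clear0 (natf c))); rewrite fsum_add0.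
by change (phi (natf c) + k * e = m - e); lia.
Qed.

Lemma fact_m_phi c : c \in fact_set gB m -> phi (natf c) = m.
Proof. by move=> c_fact; rewrite -[RHS](fact_m_split c_fact) fact_m_coef0 ?addn0. Qed.

Lemma dmax_attained : dmax gS (W + m * e) = #|fact_set gB m|.
Proof.
apply/eqP; rewrite eqn_leq dmax_le ?inS_cons_addn_mul ?W_in //=; last exact: gS_pos.
pose L := ordS gS W + m.
have le_cL c : c \in fact_set gB m -> len K (clear0 (natf c)) <= L.
  by move=> c_fact; rewrite (leq_trans (len_clear0_le_phi _)) // fact_m_phi ?leq_addl.
apply: (card_le_fact_set gS_pos (h := pad0 L)).
- move=> c c_fact; rewrite fsum_pad0 ?le_cL // fact_m_phi // /L mulnDl.
  by move: (ordS_restE W_in); lia.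
- move=> c c2 c_fact agree_c2; apply/eqP.
  by rewrite flenE (eq_len agree_c2) len_pad0 ?le_cL ?ordS_addn_mul ?W_in.
move=> c c' c_fact c'_fact agree.
have clear_cc' i : i < size gB -> clear0 (natf c) i = clear0 (natf c') i.
  rewrite size_blowup; case: i => [|i] // lt_i; have := agree i.+1 lt_i.
  by rewrite /pad0 /add0 /clear0 /= !mul0n !addn0.
apply: natf_inj_clear0 (clear_cc').
rewrite !flenE (len_clear0 _ (natf c)) (len_clear0 _ (natf c')) !fact_m_coef0 //.
by rewrite (eq_len clear_cc').
Qed.

Lemma is_dmaxS_blowup : is_dmaxS gS #|fact_set gB m|.
Proof.
split; last exact: dmax_le.
by exists (W + m * e); rewrite dmax_attained inS_cons_addn_mul ?W_in //; exact: gS_pos.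
Qed.

End Supersymmetric.

Theorem theorem4p12 (g : seq nat) :
  num_semigroup_mingens g -> supersymmetric g ->
  forall f : int, frobenius (blowup g) f ->
  is_dmaxS g #|fact_set (blowup g) (absz (f + (mult g)%:Z)%R)|.
Proof.
case: g => [|e s] [e_pos sorted_g S_cofinite _] S_super f frob_f //.
have e_lt_gens : forall a, a \in s -> e < a.
  by apply/allP; exact: order_path_min ltn_trans sorted_g.
have pred_lt_e : e.-1 < e by rewrite ltn_predL.
have [W W_apery W_index] :=
  apery_index_onto e_pos (inS_adde e_pos e_lt_gens) S_cofinite pred_lt_e.
have := frobenius_blowup e_pos e_lt_gens S_cofinite S_super W_apery W_index.
move=> /(frobenius_uniq frob_f) ->; rewrite GRing.subrK.
exact: is_dmaxS_blowup.
Qed.
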